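(* Let $R$ be a Noetherian local ring and let $\varphi$ be an integral local self-map of $R$ (i.e. $R$ is integral over $\varphi(R)$). Assume that every minimal prime ideal of $R$ contains $\ker\varphi$. Then the map ${}^a\varphi:\operatorname{Spec}(R)\to\operatorname{Spec}(R)$, $\mathfrak{p}\mapsto\varphi^{-1}(\mathfrak{p})$, restricts to a permutation of the finite set $\operatorname{Min}(R)$ of minimal prime ideals of $R$.
   Context: A self-map of a ring is a ring endomorphism; local means $\varphi(\mathfrak{m})\subseteq\mathfrak{m}$. *)

From HB Require Import structures.
From mathcomp Require Import all_boot all_order all_algebra.
Set Implicit Arguments. Unset Strict Implicit. Unset Printing Implicit Defensive.
Import GRing.Theory.
Local Open Scope ring_scope.

Section Ideals.
Variable R : comNzRingType.

Definition ideal_sub (I J : R -> Prop) : Prop := forall x, I x -> J x.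
Definition ideal_eq (I J : R -> Prop) : Prop := forall x, I x <-> J x.

Definition is_ideal (I : R -> Prop) : Prop :=
  [/\ I 0, (forall x y, I x -> I y -> I (x + y)) & (forall r x, I x -> I (r * x))].

Definition prime_ideal (P : R -> Prop) : Prop :=
  [/\ is_ideal P, ~ P 1 & (forall a b, P (a * b) -> P a \/ P b)].

Definition maximal_ideal (M : R -> Prop) : Prop :=
  [/\ is_ideal M, ~ M 1 &
     (forall J, is_ideal J -> ideal_sub M J -> J 1 \/ ideal_sub J M)].

Definition minimal_prime (P : R -> Prop) : Prop :=
  prime_ideal P /\ (forall Q, prime_ideal Q -> ideal_sub Q P -> ideal_sub P Q).

Definition noetherian : Prop :=
  forall I : nat -> (R -> Prop), (forall n, is_ideal (I n)) ->
    (forall n, ideal_sub (I n) (I n.+1)) ->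
    exists N, forall k, (N <= k)%N -> ideal_sub (I k) (I N).

Definition local_ring (m : R -> Prop) : Prop :=
  maximal_ideal m /\ (forall n, maximal_ideal n -> ideal_eq n m).

End Ideals.

Definition preimage_ideal (R : comNzRingType) (phi : R -> R) (P : R -> Prop) : R -> Prop :=
  fun x => P (phi x).

Definition ker_map (R : comNzRingType) (phi : R -> R) : R -> Prop :=
  fun x => phi x = 0.

(* R is integral over phi(R): each x is a root of a monic polynomial
   with coefficients in phi(R). *)
Definition integral_map (R : comNzRingType) (phi : {rmorphism R -> R}) : Prop :=
  forall x : R, exists p : {poly R}, p \is monic /\ (map_poly phi p).[x] = 0.

From HB Require Import structures.
From mathcomp Require Import all_boot all_order all_algebra.
From Stdlib Require Import Classical ClassicalEpsilon.
From Stdlib Require Import FunctionalExtensionality PropExtensionality.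
From mathcomp Require Import ring.
Set Implicit Arguments. Unset Strict Implicit. Unset Printing Implicit Defensive.
Import GRing.Theory.
Local Open Scope ring_scope.

(* Noetherian induction gives, for every ideal I, a finite list of primes
      over I such that every prime over I contains one of them; taking I = 0,
      every prime contains a minimal prime and Min(R) is finite.
   2. If Q is a minimal prime then phi(R \ Q) is a multiplicative set missing
      0 (as ker phi is in Q); a prime P disjoint from it, shrunk to a minimal
      prime, satisfies phi^-1(P) ⊆ Q, hence phi^-1(P) = Q by minimality.
      So contraction maps Min(R) ONTO Min(R).
   3. A map from a finite set onto itself is a permutation of it.
   Ideals are predicates R -> Prop; extensionality identifies equivalent
   ideals, and a classical equality test lets us put them into sequences. *)

Definition decide (P : Prop) : bool :=
  if excluded_middle_informative P then true else false.

Lemma decideP (P : Prop) : reflect P (decide P).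
Proof. by rewrite /decide; case: excluded_middle_informative => H; constructor. Qed.

Definition classically (T : Type) : Type := T.

Lemma classically_eqP (T : Type) :
  Equality.axiom (fun x y : classically T => decide (x = y)).
Proof. by move=> x y; apply: decideP. Qed.

HB.instance Definition _ (T : Type) :=
  hasDecEq.Build (classically T) (@classically_eqP T).

Lemma uniq_map_inj (T U : eqType) (f : T -> U) (s : seq T) :
  uniq (map f s) -> {in s &, injective f}.
Proof.
move=> Ufs x y sx sy fxy.
have := uniqP (f x) Ufs (index x s) (index y s).
rewrite !inE size_map !index_mem !(nth_map x) ?index_mem // !nth_index //.
by move=> /(_ sx sy fxy) eq_idx; rewrite -(nth_index x sx) eq_idx nth_index.
Qed.

(* A map sending a finite set A onto itself is a permutation of A: it maps
   A into A and is injective on A (compare the sizes of A and f(A)). *)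
Lemma finite_onto_self (T : eqType) (A : T -> Prop) (f : T -> T) (s0 : seq T) :
  (forall x, A x -> x \in s0) ->
  (forall y, A y -> exists2 x, A x & f x = y) ->
  (forall x, A x -> A (f x)) /\ (forall x y, A x -> A y -> f x = f y -> x = y).
Proof.
move=> A_sub_s0 onto.
pose s := undup [seq x <- s0 | decide (A x)].
have memsP x : reflect (A x) (x \in s).
  rewrite mem_undup mem_filter; apply: (iffP andP) => [[/decideP] //|Ax].
  by split; [exact/decideP | exact: A_sub_s0].
have s_sub_fs : {subset s <= map f s}.
  by move=> y /memsP /onto [x Ax <-]; apply/map_f/memsP.
have fs_le_s := eq_leq (size_map f s).
have [_ eq_s] := uniq_min_size (undup_uniq _) s_sub_fs fs_le_s.
have Ufs := leq_size_uniq (undup_uniq _) s_sub_fs fs_le_s.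
split=> [x /memsP sx | x y /memsP sx /memsP sy]; last exact: uniq_map_inj Ufs x y sx sy.
by apply/memsP; rewrite eq_s map_f.
Qed.

Lemma seq_minimal_below (T : eqType) (le : T -> T -> Prop) (s : seq T) (q : T) :
  (forall x y z, le x y -> le y z -> le x z) ->
  (exists2 x, x \in s & le x q) ->
  exists x, [/\ x \in s, le x q & forall y, y \in s -> le y x -> le x y].
Proof.
move=> trans; elim: s => [|y s IHs] [x]; first by rewrite in_nil.
rewrite inE => /predU1P x_ys le_xq.
have [[x' s_x' le_x'q]|none_below] := classic (exists2 x, x \in s & le x q).
  have [x0 [s_x0 le_x0q min_x0]] := IHs (ex_intro2 _ _ x' s_x' le_x'q).
  have [le_yx0|nle_yx0] := classic (le y x0).
    exists y; split; [exact: mem_head | exact: trans _ _ _ le_yx0 le_x0q |].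
    move=> z; rewrite inE => /predU1P [-> //|s_z le_zy].
    exact: trans _ _ _ le_yx0 (min_x0 z s_z (trans _ _ _ le_zy le_yx0)).
  exists x0; split=> //; first by rewrite inE s_x0 orbT.
  by move=> z; rewrite inE => /predU1P [-> /nle_yx0|]; [|exact: min_x0].
have le_yq : le y q.
  by case: x_ys => [<- //|s_x]; exfalso; apply: none_below; exists x.
exists y; split=> //; first exact: mem_head.
move=> z; rewrite inE => /predU1P [-> //|s_z le_zy].
by exfalso; apply: none_below; exists z => //; apply: trans _ _ _ le_zy le_yq.
Qed.

Section Ideals.
Variable R : comNzRingType.
Implicit Types I J P Q S : R -> Prop.

Lemma ideal_eqP I J : ideal_eq I J <-> I = J.
Proof.
split=> [IJ|-> x //]; apply: functional_extensionality => x.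
exact: propositional_extensionality.
Qed.

Lemma ideal_sub_trans I J P : ideal_sub I J -> ideal_sub J P -> ideal_sub I P.
Proof. by move=> IJ JP x /IJ /JP. Qed.

Definition zero_ideal : R -> Prop := fun x => x = 0.

Lemma zero_ideal_ideal : is_ideal zero_ideal.
Proof. by split=> // [x y -> ->|r x ->]; rewrite ?addr0 ?mulr0. Qed.

Lemma prime_over_zero P : prime_ideal P -> ideal_sub zero_ideal P.
Proof. by case=> -[P0 _ _] _ _ x ->. Qed.

Definition adjoin I (a : R) : R -> Prop := fun x => exists i r, I i /\ x = i + r * a.

Lemma adjoin_ideal I a : is_ideal I -> is_ideal (adjoin I a).
Proof.
case=> I0 IB IM; split.
- by exists 0, 0; split=> //; ring.
- move=> _ _ [i [r [Ii ->]]] [j [t [Ij ->]]].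
  by exists (i + j), (r + t); split; [exact: IB | ring].
- move=> t _ [i [r [Ii ->]]].
  by exists (t * i), (t * r); split; [exact: IM | ring].
Qed.

Lemma adjoin_sub I a : is_ideal I -> ideal_sub I (adjoin I a).
Proof. by case=> I0 _ _ x Ix; exists x, 0; rewrite mul0r addr0. Qed.

Lemma adjoin_mem I a : is_ideal I -> adjoin I a a.
Proof. by case=> I0 _ _; exists 0, 1; rewrite mul1r add0r. Qed.

Lemma adjoin_prime_sub I Q a :
  prime_ideal Q -> ideal_sub I Q -> Q a -> ideal_sub (adjoin I a) Q.
Proof. by case=> -[_ QB QM] _ _ IQ Qa _ [i [r [Ii ->]]]; apply: QB; auto. Qed.

Lemma nonprime_witness I :
  is_ideal I -> ~ I 1 -> ~ prime_ideal I ->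
  exists a b, [/\ I (a * b), ~ I a & ~ I b].
Proof.
move=> HI nI1 npI; apply: NNPP => nwit; apply: npI; split=> // a b Iab.
by apply: NNPP => nab; apply: nwit; exists a, b; split=> // Hc; apply: nab; auto.
Qed.

Hypothesis noethR : noetherian R.

(* Otherwise a
   counterexample always has a strictly larger counterexample, and iterating
   this choice yields a strictly ascending chain. *)
Lemma noetherian_ind (Prop_of : (R -> Prop) -> Prop) :
  (forall I, is_ideal I ->
     (forall J, is_ideal J -> ideal_sub I J -> ~ ideal_sub J I -> Prop_of J) ->
     Prop_of I) ->
  forall I, is_ideal I -> Prop_of I.
Proof.
move=> step I0 HI0; apply: NNPP => nP0.
pose T := {I | is_ideal I /\ ~ Prop_of I}.
have grow (t : T) : exists u : T,
    ideal_sub (sval t) (sval u) /\ ~ ideal_sub (sval u) (sval t).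
  case: t => I [HI nPI] /=; apply: NNPP => nu; apply: nPI; apply: step => // J HJ IJ nJI.
  by apply: NNPP => nPJ; apply: nu; exists (exist _ J (conj HJ nPJ)).
pose next (t : T) : T := sval (constructive_indefinite_description _ (grow t)).
have nextP t : ideal_sub (sval t) (sval (next t)) /\ ~ ideal_sub (sval (next t)) (sval t).
  by rewrite /next; case: constructive_indefinite_description.
pose chain n := iter n next (exist _ I0 (conj HI0 nP0)).
have [N stable] := noethR (fun n => (proj1 (svalP (chain n))))
                          (fun n => proj1 (nextP (chain n))).
exact: (proj2 (nextP (chain N))) (stable N.+1 (leqnSn N)).
Qed.

(* By Noetherian induction: if I is not prime, one of
   I + Ra, I + Rb (with ab in I) still avoids S, or else a product of two
   elements of S would lie in I. *)
Lemma prime_avoiding S :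
  S 1 -> (forall x y, S x -> S y -> S (x * y)) ->
  forall I, is_ideal I -> (forall x, I x -> ~ S x) ->
  exists Q, [/\ prime_ideal Q, ideal_sub I Q & forall x, Q x -> ~ S x].
Proof.
move=> S1 SM; apply: noetherian_ind => I HI IH avoidI.
have nI1 : ~ I 1 by move=> I1; exact: avoidI I1 S1.
have [pI|npI] := classic (prime_ideal I); first by exists I; split.
have [a [b [Iab nIa nIb]]] := nonprime_witness HI nI1 npI.
have enlarge c : ~ I c -> (forall x, adjoin I c x -> ~ S x) ->
    exists Q, [/\ prime_ideal Q, ideal_sub I Q & forall x, Q x -> ~ S x].
  move=> nIc avoidIc.
  have [|Q [pQ IcQ avoidQ]] := IH _ (adjoin_ideal c HI) (adjoin_sub c HI) _ avoidIc.
    by move=> cI; apply: nIc; apply: cI (adjoin_mem c HI).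
  by exists Q; split=> // x /(adjoin_sub c HI); apply: IcQ.
have [[_ [i [r [Ii ->]]] Ss]|noSa] := classic (exists2 x, adjoin I a x & S x);
  last by apply: (enlarge a nIa) => x ax Sx; apply: noSa; exists x.
have [[_ [j [t [Ij ->]]] St]|noSb] := classic (exists2 x, adjoin I b x & S x);
  last by apply: (enlarge b nIb) => x bx Sx; apply: noSb; exists x.
have [_ IB IM] := HI.
exfalso; apply: avoidI (SM _ _ Ss St).
have -> : (i + r * a) * (j + t * b) = (i + r * a) * j + (t * b * i + r * t * (a * b)).
  by ring.
exact: IB _ _ (IM _ _ Ij) (IB _ _ (IM _ _ Ii) (IM _ _ Iab)).
Qed.

(* By Noetherian induction: for I proper and not prime,
   with ab in I and a, b not in I, every prime over I contains I + Ra or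
   I + Rb, so the lists for these two larger ideals can be concatenated. *)
Lemma primes_over_finite_cover I : is_ideal I ->
  exists L : seq (classically (R -> Prop)),
    (forall X, X \in L -> prime_ideal X /\ ideal_sub I X) /\
    (forall Q, prime_ideal Q -> ideal_sub I Q -> exists2 X, X \in L & ideal_sub X Q).
Proof.
move: I; apply: noetherian_ind => I HI IH.
have [I1|nI1] := classic (I 1).
  by exists [::]; split=> // Q [_ nQ1 _] IQ; case: nQ1; apply: IQ.
have [pI|npI] := classic (prime_ideal I).
  exists [:: I]; split=> [X|Q _ IQ]; last by exists I; rewrite ?mem_head.
  by rewrite inE => /eqP ->; split=> // x.
have [a [b [Iab nIa nIb]]] := nonprime_witness HI nI1 npI.
have cover_adjoin c : ~ I c -> exists L : seq (classically (R -> Prop)),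
    (forall X, X \in L -> prime_ideal X /\ ideal_sub I X) /\
    (forall Q, prime_ideal Q -> ideal_sub I Q -> Q c -> exists2 X, X \in L & ideal_sub X Q).
  move=> nIc; have [|L [L_over L_cover]] := IH _ (adjoin_ideal c HI) (adjoin_sub c HI).
    by move=> cI; apply: nIc; apply: cI (adjoin_mem c HI).
  exists L; split=> [X /L_over [pX IcX]|Q pQ IQ Qc].
    by split=> //; apply: ideal_sub_trans (adjoin_sub c HI) IcX.
  exact: L_cover Q pQ (adjoin_prime_sub pQ IQ Qc).
have [La [La_over La_cover]] := cover_adjoin a nIa.
have [Lb [Lb_over Lb_cover]] := cover_adjoin b nIb.
exists (La ++ Lb); split=> [X|Q pQ IQ].
  by rewrite mem_cat => /orP [/La_over|/Lb_over].
have [_ _ Qp] := pQ.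
case: (Qp a b (IQ _ Iab)) => [Qa|Qb].
  by have [X LaX XQ] := La_cover Q pQ IQ Qa; exists X; rewrite ?mem_cat ?LaX.
by have [X LbX XQ] := Lb_cover Q pQ IQ Qb; exists X; rewrite ?mem_cat ?LbX ?orbT.
Qed.

(* Every prime contains a minimal prime: take a member of the finite cover of
   the primes (over 0) that is inclusion-minimal in the list. *)
Lemma minimal_prime_below Q : prime_ideal Q -> exists2 P, minimal_prime P & ideal_sub P Q.
Proof.
have [L [L_prime L_cover]] := primes_over_finite_cover zero_ideal_ideal.
have cover Q' : prime_ideal Q' -> exists2 X, X \in L & ideal_sub X Q'.
  by move=> pQ'; apply: L_cover pQ' (prime_over_zero pQ').
move=> /cover cover_Q.
have [X [LX XQ minX]] := seq_minimal_below (T := classically _) (@ideal_sub_trans) cover_Q.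
exists X => //; split=> [|Q' pQ' Q'X]; first exact: (L_prime X LX).1.
have [Z LZ ZQ'] := cover Q' pQ'.
exact: ideal_sub_trans (minX Z LZ (ideal_sub_trans ZQ' Q'X)) ZQ'.
Qed.

(* Min(R) is finite: every minimal prime belongs to the finite cover. *)
Lemma minimal_primes_finite :
  exists s : seq (classically (R -> Prop)), forall P, minimal_prime P -> P \in s.
Proof.
have [L [L_prime L_cover]] := primes_over_finite_cover zero_ideal_ideal.
exists L => P [pP minP]; have [X LX XP] := L_cover P pP (prime_over_zero pP).
suff -> : P = X by [].
by apply/ideal_eqP => x; split=> [|/XP //]; apply: minP (L_prime X LX).1 XP x.
Qed.

Variable phi : {rmorphism R -> R}.

Lemma preimage_prime P : prime_ideal P -> prime_ideal (preimage_ideal phi P).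
Proof.
rewrite /preimage_ideal => -[[P0 PB PM] nP1 Pp]; split; first split.
- by rewrite rmorph0.
- by move=> x y Px Py; rewrite rmorphD; apply: PB.
- by move=> r x Px; rewrite rmorphM; apply: PM.
- by rewrite rmorph1.
- by move=> a b; rewrite rmorphM => /Pp.
Qed.

Hypothesis ker_in_minimal : forall P, minimal_prime P -> ideal_sub (ker_map phi) P.

(* Every minimal prime Q is the contraction of a minimal prime: phi(R \ Q) is
   multiplicative and misses 0, so some prime P' avoids it; a minimal prime
   P inside P' then satisfies phi^-1(P) ⊆ Q, hence equality. *)
Lemma contraction_onto_minimal Q :
  minimal_prime Q -> exists2 P, minimal_prime P & preimage_ideal phi P = Q.
Proof.
move=> minQ; have [pQ minimalQ] := minQ; have [_ _ Qp] := pQ.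
pose image_off_Q x := exists2 u, ~ Q u & x = phi u.
have [|||P' [pP' _ P'_avoid]] := @prime_avoiding image_off_Q _ _ _ zero_ideal_ideal.
- by exists 1; [case: pQ | rewrite rmorph1].
- move=> _ _ [u nQu ->] [v nQv ->]; exists (u * v); last by rewrite rmorphM.
  by case/Qp.
- move=> _ -> [u nQu phiu0]; apply: nQu; apply: (ker_in_minimal minQ).
  by rewrite /ker_map -phiu0.
have [P minP PP'] := minimal_prime_below pP'.
have PQ : ideal_sub (preimage_ideal phi P) Q.
  by move=> x Px; apply: NNPP => nQx; apply: (P'_avoid (phi x)); [exact: PP' | exists x].
exists P => //; apply/ideal_eqP => x; split=> [/PQ //|].
exact: minimalQ (preimage_prime minP.1) PQ x.
Qed.

End Ideals.
Unset Implicit Arguments.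

Theorem mainTheorem14 (R : comNzRingType) (m : R -> Prop)
  (phi : {rmorphism R -> R})
  (HN : noetherian R) (Hloc : local_ring m)
  (Hlocal_map : forall x, m x -> m (phi x))
  (Hint : integral_map phi)
  (Hker : forall P, minimal_prime P -> ideal_sub (ker_map phi) P) :
  (exists (n : nat) (f : nat -> (R -> Prop)),
      forall P, minimal_prime P -> exists2 i, (i < n)%N & ideal_eq P (f i)) /\
  (forall P, minimal_prime P -> minimal_prime (preimage_ideal phi P)) /\
  (forall P Q, minimal_prime P -> minimal_prime Q ->
      ideal_eq (preimage_ideal phi P) (preimage_ideal phi Q) -> ideal_eq P Q) /\
  (forall Q, minimal_prime Q ->
      exists2 P, minimal_prime P & ideal_eq (preimage_ideal phi P) Q).
Proof.
have [s min_in_s] := minimal_primes_finite HN.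
have onto := contraction_onto_minimal HN Hker.
have [min_to_min contraction_inj] :=
  @finite_onto_self (classically (R -> Prop)) _ (preimage_ideal phi) s min_in_s onto.
split.
  exists (size s), (nth (@zero_ideal R) s) => P /min_in_s sP.
  exists (index (P : classically _) s); first by rewrite index_mem.
  by apply/ideal_eqP; rewrite (nth_index _ sP).
split=> //; split=> [P Q minP minQ /ideal_eqP FPQ|Q /onto [P minP <-]].
  by apply/ideal_eqP; apply: contraction_inj.
by exists P => //; apply/ideal_eqP.
Qed.
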